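(* Let $G$ be a digraph with at least one arc, and let $d(G)$ and $d(LG)$ denote the inner diameters of $G$ and of its line digraph $LG$. Then $$d(G)-1\le d(LG)\le d(G)+1.$$
   Context: Digraphs are finite and may have loops and multiple arcs. $\mathrm{dist}_G(u,v)$ is the length of a shortest directed walk from $u$ to $v$ ($\infty$ if none; $\mathrm{dist}_G(u,u)=0$). The inner diameter of $G$ is $d(G)=\max\{\mathrm{dist}_G(u,v): u,v\in V(G),\ \mathrm{dist}_G(u,v)<\infty\}$. The line digraph $LG$ has as vertex set the set of arcs of $G$, with an arc from $e$ to $f$ whenever the head of $e$ equals the tail of $f$. *)

From mathcomp Require Import all_boot.
Unset Printing Implicit Defensive.

(* A finite digraph, possibly with loops and multiple arcs:
   finite vertex type, finite darc type, dtail and dhead maps. *)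
Record digraph := Digraph {
  dvert : finType;
  darc : finType;
  dtail : darc -> dvert;
  dhead : darc -> dvert }.
Arguments dtail {G} _ : rename.
Arguments dhead {G} _ : rename.
Arguments Digraph {dvert darc} dtail dhead : rename.

Fixpoint is_walk (G : digraph) (u v : dvert G) (s : seq (darc G)) : bool :=
  match s with
  | [::] => u == v
  | a :: s' => (dtail a == u) && is_walk G (dhead a) v s'
  end.

Definition walk_of_length (G : digraph) (k : nat) (u v : dvert G) : Prop :=
  exists s : seq (darc G), size s = k /\ is_walk G u v s.

Definition is_dist (G : digraph) (u v : dvert G) (k : nat) : Prop :=
  walk_of_length G k u v /\ forall j, j < k -> ~ walk_of_length G j u v.

Definition is_inner_diameter (G : digraph) (d : nat) : Prop :=
  (exists u v, is_dist G u v d) /\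
  (forall u v k, is_dist G u v k -> k <= d).

Definition line_arc (G : digraph) : finType :=
  {p : darc G * darc G | dhead p.1 == dtail p.2}.

Definition line_digraph (G : digraph) : digraph :=
  @Digraph (darc G) (line_arc G)
    (fun p : line_arc G => (val p).1) (fun p : line_arc G => (val p).2).

(** Arcs [e], [f] of [G] are joined in [LG] by a walk of length [k+1] exactly
    when [G] has a walk of length [k] from the head of [e] to the tail of [f].
    Hence [dist_LG(e,f) <= dist_G(head e, tail f) + 1], which gives the upper
    bound.  For the lower bound, take [u], [v] at distance [d(G) >= 1] in [G]
    with first arc [a] and last arc [b] on a shortest walk: [a] and [b] are
    joined in [LG], and any [LG]-walk of length [j] from [a] to [b] yields a
    [G]-walk of length [j+1] from [u] to [v], so [dist_LG(a,b) >= d(G) - 1]. *)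

From Stdlib Require Import Classical.
From mathcomp Require Import all_boot zify.

Set Implicit Arguments.
Unset Strict Implicit.

Lemma ex_minn_classic (P : nat -> Prop) :
  (exists k, P k) -> exists j, P j /\ forall i, i < j -> ~ P i.
Proof.
move=> [k Pk]; elim: k {-2}k (leqnn k) Pk => [|n IHn] k le_kn Pk.
  by exists k; split=> // i; move: le_kn; rewrite leqn0 => /eqP->.
case: (classic (exists i, i < k /\ P i)) => [[i [lt_ik Pi]]|noP].
  by apply: (IHn i) => //; lia.
by exists k; split=> // i lt_ik Pi; apply: noP; exists i.
Qed.

Lemma ex_maxn_classic (P : nat -> Prop) (m : nat) :
  (exists k, P k) -> (forall k, P k -> k <= m) ->
  exists d, P d /\ forall k, P k -> k <= d.
Proof.
elim: m => [|m IHm] exP le_m.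
  by case: exP => k Pk; exists k; split=> // j /le_m; lia.
case: (classic (P m.+1)) => [Pm|nPm]; first by exists m.+1.
apply: IHm => // k Pk; have := le_m k Pk; rewrite leq_eqVlt ltnS.
by case/orP=> // /eqP Ek; rewrite Ek in Pk.
Qed.

Lemma functional_rel_bounded (T : finType) (R : T -> nat -> Prop) :
  (forall t j k, R t j -> R t k -> j = k) ->
  exists m, forall t k, R t k -> k <= m.
Proof.
move=> R_fun.
suff [m le_m] : exists m, forall t, t \in enum T -> forall k, R t k -> k <= m.
  by exists m => t; apply: le_m; rewrite mem_enum.
elim: (enum T) => [|t s [m le_m]]; first by exists 0.
case: (classic (exists k, R t k)) => [[kt Rt]|nRt].
  exists (maxn m kt) => t'; rewrite inE => /predU1P[->|t's] k Rk.
    by rewrite (R_fun _ _ _ Rk Rt) leq_maxr.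
  exact: leq_trans (le_m _ t's _ Rk) (leq_maxl _ _).
exists m => t'; rewrite inE => /predU1P[->|t's] k Rk; last exact: le_m t's k Rk.
by case: nRt; exists k.
Qed.

Section Distance.

Variable X : digraph.
Implicit Types (u v : dvert X) (s : seq (darc X)).

Lemma is_walk_rcons u v s a :
  is_walk X u v (rcons s a) = is_walk X u (dtail a) s && (dhead a == v).
Proof.
elim: s u => [|b s IHs] u /=; last by rewrite IHs andbA.
by rewrite eq_sym.
Qed.

Lemma is_walk_last v a s : is_walk X (dhead a) v s -> dhead (last a s) = v.
Proof. by elim: s a => [|b s IHs] a /=; [move/eqP | case/andP=> _ /IHs]. Qed.

Lemma walk_of_length0 u : walk_of_length X 0 u u.
Proof. by exists [::]; rewrite /= eqxx. Qed.

Lemma dist_le u v j k : is_dist X u v j -> walk_of_length X k u v -> j <= k.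
Proof. by move=> [_ no_shorter] W; rewrite leqNgt; apply/negP=> /no_shorter. Qed.

Lemma dist_unique u v j k : is_dist X u v j -> is_dist X u v k -> j = k.
Proof.
move=> Dj Dk; apply/eqP; rewrite eqn_leq.
by rewrite (dist_le Dj (proj1 Dk)) (dist_le Dk (proj1 Dj)).
Qed.

Lemma dist_exists u v k : walk_of_length X k u v -> exists j, is_dist X u v j.
Proof.
move=> W; have [|j Dj] := @ex_minn_classic (fun j => walk_of_length X j u v).
  by exists k.
by exists j.
Qed.

Lemma inner_diameter_exists (x : dvert X) : exists d, is_inner_diameter X d.
Proof.
have [m le_m] := functional_rel_bounded
  (R := fun p : dvert X * dvert X => is_dist X p.1 p.2) (fun p => @dist_unique p.1 p.2).
have [|k [u [v Dk]]|d [Dd maxd]] :=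
  @ex_maxn_classic (fun k => exists u v, is_dist X u v k) m.
- exists 0, x, x; split=> [|j]; [exact: walk_of_length0 | by rewrite ltn0].
- exact: le_m (u, v) k Dk.
by exists d; split=> // u v k Dk; apply: maxd; exists u, v.
Qed.

End Distance.

Section LineDigraph.

Variable G : digraph.
Local Notation LG := (line_digraph G).
Implicit Types (u v : dvert G) (e f : darc G) (s : seq (darc G)).

Lemma line_walk_of_walk v a s :
  is_walk G (dhead a) v s -> walk_of_length LG (size s) a (last a s).
Proof.
elim: s a => [|b s IHs] a /=; first by move=> _; exact: walk_of_length0.
case/andP=> /eqP tail_b /IHs[t [size_t Wt]].
have ab : dhead (a, b).1 == dtail (a, b).2 by rewrite /= tail_b.
by exists ((exist _ (a, b) ab : line_arc G) :: t); rewrite /= size_t Wt eqxx.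
Qed.

Lemma walk_of_line_walk e f p t :
  is_walk LG e f (p :: t) -> walk_of_length G (size t) (dhead e) (dtail f).
Proof.
elim: t e p => [|q t IHt] e [[x y] /= /eqP xy] /=.
  by case/andP=> /eqP <- /eqP <-; exists [::]; rewrite /= xy eqxx.
case/andP=> /eqP <- Wq; have [s [size_s Ws]] := IHt _ _ Wq.
by exists (y :: s); rewrite /= size_s Ws xy eqxx.
Qed.

Lemma line_walk_succ k e f :
  walk_of_length LG k.+1 e f <-> walk_of_length G k (dhead e) (dtail f).
Proof.
split=> [[[|p t] [//= [<-]]]|[s [<- Ws]]]; first exact: walk_of_line_walk.
have Wf : is_walk G (dhead e) (dhead f) (rcons s f).
  by rewrite is_walk_rcons Ws eqxx.
by have := line_walk_of_walk Wf; rewrite size_rcons last_rcons.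
Qed.

Lemma line_walk0 e f : walk_of_length LG 0 e f -> e = f.
Proof. by move=> [[|p t] [//= _ /eqP]]. Qed.

Lemma walk_of_line_walk_ends j e f :
  walk_of_length LG j e f -> walk_of_length G j.+1 (dtail e) (dhead f).
Proof.
case: j => [/line_walk0 <-|i /line_walk_succ [s [<- Ws]]].
  by exists [:: e]; rewrite /= !eqxx.
by exists (e :: rcons s f); rewrite /= size_rcons is_walk_rcons Ws !eqxx.
Qed.

Lemma line_inner_diameter_ge dG dLG :
  is_inner_diameter G dG -> is_inner_diameter LG dLG -> dG - 1 <= dLG.
Proof.
move=> [[u [v Duv]] _] [_ maxLG].
have [[|a s] [size_s]] := proj1 Duv; first by rewrite -size_s.
case/andP=> /eqP tail_a Ws.
have [j Dj] := dist_exists (line_walk_of_walk Ws).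
have /(dist_le Duv) : walk_of_length G j.+1 u v.
  by rewrite -tail_a -(is_walk_last Ws); exact: walk_of_line_walk_ends (proj1 Dj).
have := maxLG _ _ _ Dj; lia.
Qed.

Lemma line_inner_diameter_le dG dLG :
  is_inner_diameter G dG -> is_inner_diameter LG dLG -> dLG <= dG + 1.
Proof.
move=> [_ maxG] [[e [f Def]] _]; case: dLG Def => [//|k] Def.
have /dist_exists[j Dj] := iffLR (line_walk_succ k e f) (proj1 Def).
have /(dist_le Def) : walk_of_length LG j.+1 e f by apply/line_walk_succ; case: Dj.
by have := maxG _ _ _ Dj; lia.
Qed.

End LineDigraph.

Theorem proposition2p3 (G : digraph) (a0 : darc G) :
  (exists d, is_inner_diameter G d) /\
  (exists d, is_inner_diameter (line_digraph G) d) /\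
  (forall dG dLG, is_inner_diameter G dG ->
     is_inner_diameter (line_digraph G) dLG ->
     dG - 1 <= dLG /\ dLG <= dG + 1).
Proof.
split; first exact: inner_diameter_exists (dtail a0).
split; first exact: (inner_diameter_exists (X := line_digraph G) a0).
move=> dG dLG DG DLG.
by split; [exact: line_inner_diameter_ge DG DLG | exact: line_inner_diameter_le DG DLG].
Qed.
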